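(* For $n\ge 2$, the path $P_n$ with $n$ vertices satisfies $\nu^*(P_n)=2n^2-2n-1$.
   Context: For a finite simple graph $G=(V,E)$ with $\ell=|V|+|E|$, a construction sequence (c-sequence) is a bijection $x:\{1,\dots,\ell\}\to V\sqcup E$ such that every edge $e=uw$ satisfies $x^{-1}(e)>\max\{x^{-1}(u),x^{-1}(w)\}$. The cost of $x$ is $\nu(x)=\sum_{e=uw\in E}\big(2x^{-1}(e)-x^{-1}(u)-x^{-1}(w)\big)$, and $\nu^*(G)$ is the maximum of $\nu(x)$ over all c-sequences for $G$. $P_n$ is the path with vertex set $\{1,\dots,n\}$ and edges $\{j,j+1\}$, $1\le j\le n-1$. *)

From mathcomp Require Import all_boot.
Set Implicit Arguments. Unset Strict Implicit. Unset Printing Implicit Defensive.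

(* A finite (simple) graph is given by a finite vertex type V, a finite edge
   type E, and the two endpoints of each edge: ends e = (u, w).
   The disjoint union V ⊔ E is the sum type (V + E). *)

Section CSeq.
Variables (V E : finType) (ends : E -> V * V).

Definition ell := (#|V| + #|E|)%N.

(* A c-sequence x : {1..ell} -> V ⊔ E (a bijection) is represented by its
   inverse  sigma = x^{-1} : V ⊔ E -> 'I_ell, an injective (hence bijective,
   by cardinality) map; the position of a in the sequence is (sigma a).+1. *)
Definition pos (s : {ffun V + E -> 'I_ell}) (a : V + E) : nat := (s a).+1.

Definition is_cseq (s : {ffun V + E -> 'I_ell}) : bool :=
  injectiveb s &&
  [forall e : E, (pos s (inl (ends e).1) < pos s (inr e))
              && (pos s (inl (ends e).2) < pos s (inr e))].

(* cost nu(x) = sum over edges e = uw of 2 x^{-1}(e) - x^{-1}(u) - x^{-1}(w);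
   for a c-sequence every summand is nonnegative, so nat subtraction is exact. *)
Definition cost (s : {ffun V + E -> 'I_ell}) : nat :=
  \sum_(e : E) (2 * pos s (inr e) - (pos s (inl (ends e).1) + pos s (inl (ends e).2))).

Definition nu_star : nat := \max_(s | is_cseq s) cost s.

End CSeq.

(* The path P_n: vertices 1..n (here 'I_n, i.e. 0..n-1), edges {j, j+1}
   for 1 <= j <= n-1 (here j : 'I_(n.-1), joining j and j+1). *)
Lemma path_succ_lt (n : nat) (j : 'I_n.-1) : (j.+1 < n)%N.
Proof. by case: n j => [|n] [j /= Hj]. Qed.

Definition path_ends (n : nat) (j : 'I_n.-1) : 'I_n * 'I_n :=
  (widen_ord (leq_pred n) j, Ordinal (path_succ_lt j)).

From mathcomp Require Import all_boot zify.
Set Implicit Arguments. Unset Strict Implicit. Unset Printing Implicit Defensive.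

(* Write p for the position map of a c-sequence of P_n and S for the sum of the
   vertex positions. All positions together are 1, ..., 2n-1, and every vertex
   except the two ends lies on two edges, so
     nu = 2 C(2n, 2) + p(1) + p(n) - 4 S = 2 C(2n, 2) - 3 S - S',
   where S' is the sum of the positions of the n-2 inner vertices. Sums of k
   distinct positive integers are at least C(k+1, 2), which bounds S and S' from
   below and gives nu <= 2n^2 - 2n - 1. Equality holds for the c-sequence listing
   the inner vertices, then the two ends, then all edges. *)

Lemma bin2S k : 'C(k.+1, 2) = 'C(k, 2) + k.
Proof. by rewrite binS bin1. Qed.

Lemma sum_succ (I : finType) (g : I -> nat) : \sum_i (g i).+1 = \sum_i g i + #|I|.
Proof. by rewrite -sum1_card -big_split; apply: eq_bigr => i _; exact/esym/addn1. Qed.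

Lemma sorted_sumn_geq (a : nat) (s : seq nat) :
  sorted ltn s -> all (leq a) s -> a * size s + 'C(size s, 2) <= sumn s.
Proof.
elim: s a => [|x t IHt] a /=; first by rewrite muln0.
move=> x_t /andP[a_x a_t].
have /allP x_lt_t := order_path_min ltn_trans x_t.
have aS_t : all (leq a.+1) t by apply/allP => y /x_lt_t; apply: leq_trans.
have := IHt a.+1 (path_sorted x_t) aS_t.
rewrite bin2S; lia.
Qed.

Lemma bin2_leq_sumn_uniq (s : seq nat) : uniq s -> 'C(size s, 2) <= sumn s.
Proof.
move=> s_uniq; have s_sort := permEl (perm_sort leq s).
have := @sorted_sumn_geq 0 (sort leq s).
rewrite mul0n add0n (perm_sumn s_sort) size_sort; apply; last by apply/allP.
by rewrite ltn_sorted_uniq_leq sort_uniq s_uniq sort_sorted //; exact: leq_total.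
Qed.

Lemma bin2_leq_sum_inj (I : finType) (g : I -> nat) :
  injective g -> 'C(#|I|, 2) <= \sum_i g i.
Proof.
move=> g_inj; have := @bin2_leq_sumn_uniq (map g (enum I)).
by rewrite (map_inj_uniq g_inj) enum_uniq size_map -cardE sumnE big_map big_enum; apply.
Qed.

Lemma bin2S_leq_sum_succ_inj (I : finType) (g : I -> nat) :
  injective g -> 'C(#|I|.+1, 2) <= \sum_i (g i).+1.
Proof. by move=> /bin2_leq_sum_inj; rewrite sum_succ bin2S leq_add2r. Qed.

Lemma sum_succ_bij (T : finType) (n : nat) (g : T -> 'I_n) :
  injective g -> #|T| = n -> \sum_t (g t).+1 = 'C(n.+1, 2).
Proof.
move=> g_inj card_T.
have g_bij : bijective g by apply: (inj_card_bij g_inj); rewrite card_ord card_T.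
rewrite (@sum_succ T (fun t => nat_of_ord (g t))) card_T bin2S -bin2_sum big_mkord.
by rewrite (reindex g) //; apply: onW_bij.
Qed.

Section CSeqSums.
Variables (V E : finType) (ends : E -> V * V).
Implicit Type s : {ffun V + E -> 'I_(ell V E)}.

Lemma sum_pos_total s : injective s ->
  \sum_v pos s (inl v) + \sum_e pos s (inr e) = 'C((ell V E).+1, 2).
Proof.
move=> s_inj; rewrite -(big_sumType _ xpredT (pos s)).
by apply: sum_succ_bij s_inj _; rewrite card_sum.
Qed.

Lemma cost_cseq s : is_cseq ends s ->
  cost ends s + \sum_e (pos s (inl (ends e).1) + pos s (inl (ends e).2))
  = 2 * \sum_e pos s (inr e).
Proof.
case/andP=> _ /forallP ends_before; rewrite /cost -big_split big_distrr /=.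
apply: eq_bigr => e _; have /andP[lt1 lt2] := ends_before e.
by rewrite subnK // mul2n -addnn leq_add // ltnW.
Qed.

End CSeqSums.

Lemma path_ends_sum m (f : 'I_m.+1 -> nat) :
  \sum_(j : 'I_m.+1.-1) (f (path_ends j).1 + f (path_ends j).2) + (f ord0 + f ord_max)
  = 2 * \sum_v f v.
Proof.
have left_ends :
    \sum_(j : 'I_m.+1.-1) f (path_ends j).1 = \sum_(j < m) f (widen_ord (leqnSn m) j).
  by apply: eq_bigr => j _; congr f; apply: val_inj.
have right_ends : \sum_(j : 'I_m.+1.-1) f (path_ends j).2 = \sum_(j < m) f (lift ord0 j).
  by apply: eq_bigr => j _; congr f; apply: val_inj.
rewrite big_split /= left_ends right_ends mul2n -addnn.
rewrite {1}big_ord_recr big_ord_recl /=; lia.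
Qed.

Lemma sum_ord_split_ends m (f : 'I_m.+2 -> nat) :
  \sum_v f v = f ord0 + f ord_max + \sum_(i < m) f (lift ord0 (lift ord_max i)).
Proof.
rewrite big_ord_recl big_ord_recr /=.
have -> : lift ord0 ord_max = ord_max :> 'I_m.+2 by apply: val_inj.
have widen_lift (i : 'I_m) : widen_ord (leqnSn m) i = lift ord_max i.
  by apply: ord_inj; rewrite lift_max.
under eq_bigr => i _ do rewrite widen_lift.
lia.
Qed.

Lemma bin2_double k : 2 * 'C(k, 2) = k * k.-1.
Proof. by rewrite -mul_bin_diag bin1. Qed.

Lemma ell_ord n k : ell 'I_n 'I_k = n + k.
Proof. by rewrite /ell !card_ord. Qed.

Lemma path_cost_eq m s : is_cseq (@path_ends m.+1) s ->
  cost (@path_ends m.+1) s + 4 * \sum_v pos s (inl v)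
  = 2 * 'C((ell 'I_m.+1 'I_m.+1.-1).+1, 2) + (pos s (inl ord0) + pos s (inl ord_max)).
Proof.
(* The three identities are restated in the elaboration of the goal, so that
   lia sees syntactically equal atoms. *)
move=> s_cseq; have s_inj : injective s by case/andP: s_cseq => /injectiveP.
have total : \sum_v pos s (inl v) + \sum_e pos s (inr e)
    = 'C((ell 'I_m.+1 'I_m.+1.-1).+1, 2).
  exact: sum_pos_total.
have edges : cost (@path_ends m.+1) s
    + \sum_e (pos s (inl (path_ends e).1) + pos s (inl (path_ends e).2))
    = 2 * \sum_e pos s (inr e).
  exact: cost_cseq.
have ends_sum : \sum_e (pos s (inl (path_ends e).1) + pos s (inl (path_ends e).2))
    + (pos s (inl ord0) + pos s (inl ord_max)) = 2 * \sum_v pos s (inl v).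
  exact: path_ends_sum.
lia.
Qed.

Lemma cost_path_ub m s : is_cseq (@path_ends m.+2) s ->
  cost (@path_ends m.+2) s <= 2 * m.+2 ^ 2 - 2 * m.+2 - 1.
Proof.
move=> s_cseq; have s_inj : injective s by case/andP: s_cseq => /injectiveP.
have vertex_inj : injective (fun v : 'I_m.+2 => nat_of_ord (s (inl v))).
  by move=> v w /ord_inj /s_inj [].
have inner_inj :
    injective (fun i : 'I_m => nat_of_ord (s (inl (lift ord0 (lift ord_max i))))).
  by move=> i j /vertex_inj /lift_inj /lift_inj.
have vertices_lb : 'C(m.+3, 2) <= \sum_v pos s (inl v).
  by have := bin2S_leq_sum_succ_inj vertex_inj; rewrite card_ord.
have inner_lb : 'C(m.+1, 2) <= \sum_(i < m) pos s (inl (lift ord0 (lift ord_max i))).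
  by have := bin2S_leq_sum_succ_inj inner_inj; rewrite card_ord.
have vertices_split : \sum_v pos s (inl v) = pos s (inl ord0) + pos s (inl ord_max)
    + \sum_(i < m) pos s (inl (lift ord0 (lift ord_max i))).
  exact: sum_ord_split_ends.
have total : 'C((ell 'I_m.+2 'I_m.+2.-1).+1, 2) = 'C((m.+2 + m.+1).+1, 2).
  by rewrite ell_ord.
have := path_cost_eq s_cseq.
have := bin2_double (m.+2 + m.+1).+1; have := bin2_double m.+3; have := bin2_double m.+1.
nia.
Qed.

(* ord_pred sends the inner vertices to 0, ..., n-3 and the ends 0 and n-1 to
   n-1 and n-2. *)
Definition path_cseq n : {ffun 'I_n + 'I_n.-1 -> 'I_(ell 'I_n 'I_n.-1)} :=
  [ffun a => cast_ord (esym (ell_ord n n.-1))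
     (unsplit (match a with inl v => inl (ord_pred v) | inr e => inr e end))].

Lemma path_cseq_is_cseq n : is_cseq (@path_ends n) (path_cseq n).
Proof.
apply/andP; split.
  apply/injectiveP => -[v|e] [w|f];
    rewrite !ffunE => /cast_ord_inj /(can_inj unsplitK) //.
    by move=> pred_eq; rewrite (ord_pred_inj (inl_inj pred_eq)).
apply/forallP => e; rewrite /pos !ffunE !ltnS.
by apply/andP; split; exact: ltn_addr (ltn_ord _).
Qed.

Lemma cost_path_cseq m :
  cost (@path_ends m.+2) (path_cseq m.+2) = 2 * m.+2 ^ 2 - 2 * m.+2 - 1.
Proof.
have pos_vertex v : pos (path_cseq m.+2) (inl v) = (ord_pred v).+1 by rewrite /pos ffunE.
have vertices_sum : \sum_v pos (path_cseq m.+2) (inl v) = 'C(m.+3, 2).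
  rewrite (eq_bigr _ (fun v _ => pos_vertex v)).
  by rewrite (sum_succ_bij (@ord_pred_inj _)) ?card_ord.
have first_pos : pos (path_cseq m.+2) (inl ord0) = m.+2.
  by rewrite pos_vertex /= modn_small.
have last_pos : pos (path_cseq m.+2) (inl ord_max) = m.+1.
  by rewrite pos_vertex /= modnDr modn_small.
have total : 'C((ell 'I_m.+2 'I_m.+2.-1).+1, 2) = 'C((m.+2 + m.+1).+1, 2).
  by rewrite ell_ord.
have := path_cost_eq (path_cseq_is_cseq m.+2).
have := bin2_double (m.+2 + m.+1).+1; have := bin2_double m.+3.
nia.
Qed.

Theorem theorem3 (n : nat) (hn : (2 <= n)%N) :
  nu_star (@path_ends n) = (2 * n ^ 2 - 2 * n - 1)%N.
Proof.
case: n hn => [|[|m]] // _; apply/anti_leq/andP; split.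
  by apply/bigmax_leqP => s; apply: cost_path_ub.
by rewrite -cost_path_cseq; exact: leq_bigmax_cond (path_cseq_is_cseq _).
Qed.
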